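(* Fix integers $n\ge 1$ and a real number $p\ge 1$. For $\mathbf{c}\in\mathbb{R}^n$ and $r>0$ let $\mathrm{ball}(\mathbf{c},r)=\{\mathbf{x}\in\mathbb{R}^n:\|\mathbf{x}-\mathbf{c}\|\le r\}$, and let $\mathcal{B}^n$ be the set of all such balls, equipped with the depth dissimilarity $$d_{\mathrm{dep}}(\mathrm{ball}(\mathbf{c}_1,r_1),\mathrm{ball}(\mathbf{c}_2,r_2))=\frac{\|\mathbf{c}_1-\mathbf{c}_2\|_p^p+|r_1-r_2|^p}{r_1\, r_2}.$$ Then: (1) For any $B_1,B_2\in\mathcal{B}^n$ and any $\Delta>0$ there exists $r_0>0$ such that for every ball $\mathrm{ball}(\mathbf{c}',r')\subseteq B_2$ with $r'\le r_0$, $$d_{\mathrm{dep}}(B_1,\mathrm{ball}(\mathbf{c}',r'))>d_{\mathrm{dep}}(B_1,B_2)+\Delta.$$ (2) For any $B\in\mathcal{B}^n$, any positive integer $N$ and any $M>0$, there exist balls $B_1,\dots,B_N\in\mathcal{B}^n$ with $B_i\subseteq B$ for all $i$, such that $d_{\mathrm{dep}}(B_i,B_j)>M$ for all distinct $i,j\in\{1,\dots,N\}$. The same conclusions hold for boxes: for $\mathbf{c}\in\mathbb{R}^n$ and $\mathbf{o}\in(\mathbb{R}_{>0})^n$ let $\mathrm{box}(\mathbf{c},\mathbf{o})=\{\mathbf{x}\in\mathbb{R}^n:\mathbf{c}-\mathbf{o}\le\mathbf{x}\le\mathbf{c}+\mathbf{o}\}$ (componentwise inequalities), with depth dissimilarity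 $$d_{\mathrm{dep}}(\mathrm{box}(\mathbf{c}_1,\mathbf{o}_1),\mathrm{box}(\mathbf{c}_2,\mathbf{o}_2))=\frac{\|\mathbf{c}_1-\mathbf{c}_2\|_p^p+\|\mathbf{o}_1-\mathbf{o}_2\|_p^p}{\|\mathbf{o}_1\|\,\|\mathbf{o}_2\|};$$ then (1) holds with ''there exists $r_0>0$'' replaced by ''there exists $\mathbf{o}_0\in(\mathbb{R}_{>0})^n$'' and the condition $r'\le r_0$ replaced by $\mathbf{o}'\le\mathbf{o}_0$ componentwise for boxes $\mathrm{box}(\mathbf{c}',\mathbf{o}')\subseteq B_2$, and (2) holds with balls replaced by boxes throughout.
   Context: $\|\cdot\|_p$ denotes the $p$-norm, $\|\mathbf{x}\|_p=(\sum_i|x_i|^p)^{1/p}$; $\|\cdot\|$ without subscript denotes the Euclidean norm. *)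

From HB Require Import structures.
From mathcomp Require Import all_boot all_order all_algebra.
From mathcomp Require Import all_classical all_reals all_analysis.
Set Implicit Arguments. Unset Strict Implicit. Unset Printing Implicit Defensive.
Import Order.TTheory GRing.Theory Num.Theory.
Local Open Scope ring_scope.
Local Open Scope classical_set_scope.

Section Defs.
Variables (R : realType) (n : nat).
Notation vec := 'rV[R]_n.

Definition enorm (x : vec) : R := Num.sqrt (\sum_(i < n) x ord0 i ^+ 2).

Definition pnorm (p : R) (x : vec) : R :=
  powR (\sum_(i < n) powR `|x ord0 i| p) p^-1.

Definition eball (c : vec) (r : R) : set vec := [set x | enorm (x - c) <= r].

Definition box (c o : vec) : set vec :=
  [set x | forall i : 'I_n, c ord0 i - o ord0 i <= x ord0 i <= c ord0 i + o ord0 i].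

Definition posvec (o : vec) : Prop := forall i : 'I_n, 0 < o ord0 i.

Definition vle (o o' : vec) : Prop := forall i : 'I_n, o ord0 i <= o' ord0 i.

Definition ddep_ball (p : R) (c1 : vec) (r1 : R) (c2 : vec) (r2 : R) : R :=
  (powR (pnorm p (c1 - c2)) p + powR `|r1 - r2| p) / (r1 * r2).

Definition ddep_box (p : R) (c1 o1 c2 o2 : vec) : R :=
  (powR (pnorm p (c1 - c2)) p + powR (pnorm p (o1 - o2)) p)
    / (enorm o1 * enorm o2).

End Defs.

From HB Require Import structures.
From mathcomp Require Import all_boot all_order all_algebra.
From mathcomp Require Import all_classical all_reals all_analysis.
From mathcomp Require Import ring lra.
Set Implicit Arguments. Unset Strict Implicit. Unset Printing Implicit Defensive.
Import Order.TTheory GRing.Theory Num.Theory.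
Local Open Scope ring_scope.
Local Open Scope classical_set_scope.

(* The depth dissimilarity divides by the product of the two sizes, while its
   numerator stays bounded below as soon as one size is at most half the other:
   |r1 - r'|^p >= (r1/2)^p when r' <= r1/2.  So it blows up when one of the two
   objects shrinks, wherever the centers are.  For (2) take concentric objects whose sizes decrease so
   fast that each one is negligible against all previous ones. *)

Section EuclideanNorm.
Variables (R : realType) (n : nat).
Implicit Types (s : R) (u v : 'rV[R]_n).

Lemma enormZ s v : enorm (s *: v) = `|s| * enorm v.
Proof.
rewrite /enorm; under eq_bigr do rewrite mxE exprMn.
by rewrite -mulr_sumr sqrtrM ?sqr_ge0 // sqrtr_sqr.
Qed.

Lemma ler_enorm u v : (forall i, `|u ord0 i| <= `|v ord0 i|) -> enorm u <= enorm v.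
Proof.
move=> uv; apply: ler_wsqrtr; apply: ler_sum => i _.
rewrite -(ger0_norm (sqr_ge0 (u ord0 i))) -(ger0_norm (sqr_ge0 (v ord0 i))).
by rewrite !normrX lerXn2r ?nnegrE.
Qed.

Lemma coord_le_enorm v i : `|v ord0 i| <= enorm v.
Proof.
rewrite /enorm -(sqrtr_sqr (v ord0 i)) ler_wsqrtr // (bigD1 i) //= lerDl.
by apply: sumr_ge0 => j _; exact: sqr_ge0.
Qed.

Lemma enorm_gt0 v (i0 : 'I_n) : posvec v -> 0 < enorm v.
Proof.
by move=> v_gt0; apply: lt_le_trans (coord_le_enorm v i0); rewrite normr_gt0 gt_eqF.
Qed.

End EuclideanNorm.

Section SmallDenominator.
Variable R : realFieldType.
Implicit Types L A B P Q q : R.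

Definition small_den_bound L A q : R := q / (A * (`|L| + 1)).

Lemma small_den_bound_gt0 L A q : 0 < A -> 0 < q -> 0 < small_den_bound L A q.
Proof. by move=> A_gt0 q_gt0; rewrite divr_gt0 // mulr_gt0 // ltr_wpDl. Qed.

Lemma ltr_div_small_den L A B P Q q : 0 < A -> 0 < B -> 0 <= P -> q <= Q ->
  B <= small_den_bound L A q -> L < (P + Q) / (A * B).
Proof.
move=> A_gt0 B_gt0 P_ge0 qQ; rewrite ler_pdivlMr ?mulr_gt0 ?ltr_wpDl // => Bq.
have AB_gt0 : 0 < A * B by rewrite mulr_gt0.
rewrite ltr_pdivlMr //.
have LAB : L * (A * B) <= `|L| * (A * B).
  by apply: ler_wpM2r; [exact: ltW | exact: ler_norm].
have BE : B * (A * (`|L| + 1)) = `|L| * (A * B) + A * B by ring.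
by rewrite BE in Bq; lra.
Qed.

End SmallDenominator.

Section PowerSums.
Variables (R : realType) (p : R).
Hypothesis p_gt0 : 0 < p.
Implicit Types x y : R.

Lemma powR_pnorm n (v : 'rV[R]_n) :
  powR (pnorm p v) p = \sum_(i < n) powR `|v ord0 i| p.
Proof.
rewrite /pnorm -powRrM mulVf ?gt_eqF ?powRr1 //.
by apply: sumr_ge0 => i _; exact: powR_ge0.
Qed.

Lemma powR_pnorm0 n : powR (pnorm p (0 : 'rV[R]_n)) p = 0.
Proof. by rewrite powR_pnorm big1 // => i _; rewrite mxE normr0 powR0 ?gt_eqF. Qed.

Lemma powR_pnormZB n (a b : R) (v : 'rV[R]_n) :
  powR (pnorm p (a *: v - b *: v)) p = powR `|a - b| p * powR (pnorm p v) p.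
Proof.
rewrite [LHS]powR_pnorm [X in _ * X]powR_pnorm mulr_sumr; apply: eq_bigr => i _.
by rewrite !mxE -mulrBl normrM powRM.
Qed.

Lemma powR_coord_le_pnorm n (v : 'rV[R]_n) i :
  powR `|v ord0 i| p <= powR (pnorm p v) p.
Proof.
rewrite powR_pnorm (bigD1 i) //= lerDl.
by apply: sumr_ge0 => j _; exact: powR_ge0.
Qed.

Lemma powR_half_le_dist x y : 0 < x -> 0 <= y <= x / 2 ->
  powR (x / 2) p <= powR `|x - y| p.
Proof.
move=> x_gt0 /andP[y_ge0 y_le].
by apply: (ge0_ler_powR (ltW p_gt0)); rewrite ?nnegrE ?ger0_norm; lra.
Qed.

End PowerSums.

Section SeparatedRadii.
Variables (R : realType) (p M : R).
Hypothesis p_gt0 : 0 < p.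
Implicit Types x y r : R.

Definition shrink x : R :=
  Num.min (x / 2) (small_den_bound M x (powR (x / 2) p)).

Lemma shrink_gt0 x : 0 < x -> 0 < shrink x.
Proof.
move=> x_gt0; rewrite lt_min small_den_bound_gt0 ?powR_gt0 ?andbT //; lra.
Qed.

Lemma shrink_le_half x : shrink x <= x / 2.
Proof. by rewrite ge_min lexx. Qed.

Lemma shrink_separates x y : 0 < x -> 0 < y <= shrink x ->
  M < powR `|x - y| p / (x * y).
Proof.
move=> x_gt0 /andP[y_gt0 y_le]; rewrite -[powR _ p]add0r.
have y_half : y <= x / 2 := le_trans y_le (shrink_le_half x).
apply: (ltr_div_small_den (q := powR (x / 2) p)) => //.
  by apply: powR_half_le_dist; rewrite // (ltW y_gt0) y_half.
by apply: (le_trans y_le); rewrite ge_min lexx orbT.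
Qed.

Lemma separated_radii r : 0 < r -> exists rs : nat -> R,
  (forall k, 0 < rs k <= r) /\
  (forall i j, i != j -> M < powR `|rs i - rs j| p / (rs i * rs j)).
Proof.
move=> r_gt0; pose rs k := iter k shrink r.
have rs_gt0 k : 0 < rs k by elim: k => [|k IHk] //=; exact: shrink_gt0.
have rs_noninc : nonincreasing_seq rs.
  apply/nonincreasing_seqP => k; have := shrink_le_half (rs k).
  by have := rs_gt0 k; rewrite /rs /=; lra.
have sep i j : (i < j)%N -> M < powR `|rs i - rs j| p / (rs i * rs j).
  move=> ij; apply: shrink_separates; rewrite ?rs_gt0 //=.
  exact: (rs_noninc i.+1 j ij).
exists rs; split=> [k | i j].
  by rewrite rs_gt0; exact: (rs_noninc 0 k (leq0n k)).
case: ltngtP => // ij _; first exact: sep.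
by rewrite distrC (mulrC (rs i)); exact: sep.
Qed.

End SeparatedRadii.

Section DepthDissimilarity.
Variables (R : realType) (n : nat) (p : R).
Hypothesis p_gt0 : 0 < p.
Implicit Types (c o : 'rV[R]_n) (a b r : R).

Lemma subset_eball c r r' : r' <= r -> eball c r' `<=` eball c r.
Proof. by move=> r'r x /= /le_trans; apply. Qed.

Lemma ddep_ball_same_center c r1 r2 :
  ddep_ball p c r1 c r2 = powR `|r1 - r2| p / (r1 * r2).
Proof. by rewrite /ddep_ball subrr powR_pnorm0 ?add0r. Qed.

Lemma ddep_ball_gt_small_radius c1 r1 L : 0 < r1 -> exists2 r0, 0 < r0 &
  forall c' r', 0 < r' -> r' <= r0 -> L < ddep_ball p c1 r1 c' r'.
Proof.
move=> r1_gt0; have q_gt0 : 0 < powR (r1 / 2) p by rewrite powR_gt0 //; lra.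
exists (Num.min (r1 / 2) (small_den_bound L r1 (powR (r1 / 2) p))).
  by rewrite lt_min small_den_bound_gt0 // andbT; lra.
move=> c' r' r'_gt0; rewrite le_min => /andP[r'_half r'_small].
apply: ltr_div_small_den r'_small => //; first exact: powR_ge0.
by apply: powR_half_le_dist; rewrite // (ltW r'_gt0).
Qed.

Lemma concentric_balls_separated c r N M : 0 < r -> exists rs : 'I_N -> R,
  (forall i, 0 < rs i <= r) /\
  (forall i j, i != j -> M < ddep_ball p c (rs i) c (rs j)).
Proof.
move=> r_gt0; have [rs [rs_bnd rs_sep]] := separated_radii M p_gt0 r_gt0.
exists (fun i => rs i); split=> // i j ij.
by rewrite ddep_ball_same_center rs_sep.
Qed.

Lemma posvecZ a o : 0 < a -> posvec o -> posvec (a *: o).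
Proof. by move=> a_gt0 o_gt0 i; rewrite mxE mulr_gt0. Qed.

Lemma subset_box_scale c o a : 0 <= a <= 1 -> posvec o ->
  box c (a *: o) `<=` box c o.
Proof.
move=> /andP[a_ge0 a_le1] o_gt0 x /= x_in i; have := x_in i; rewrite mxE.
have ao : a * o ord0 i <= o ord0 i by rewrite ler_piMl // ltW.
have ao_ge0 := mulr_ge0 a_ge0 (ltW (o_gt0 i)).
by move=> /andP[lo hi]; apply/andP; lra.
Qed.

Lemma ddep_box_same_center c o1 o2 :
  ddep_box p c o1 c o2 = powR (pnorm p (o1 - o2)) p / (enorm o1 * enorm o2).
Proof. by rewrite /ddep_box subrr [X in X + _]powR_pnorm0 // add0r. Qed.

Lemma ddep_box_scaled c o a b : 0 < a -> 0 < b ->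
  ddep_box p c (a *: o) c (b *: o) =
  powR `|a - b| p / (a * b) * (powR (pnorm p o) p / enorm o ^+ 2).
Proof.
(* Unrestricted, the rewrite would try to unify [o] with [a *: o - b *: o],
   which is very slow. *)
move=> a_gt0 b_gt0; rewrite ddep_box_same_center [in LHS]powR_pnormZB //.
rewrite !enormZ (gtr0_norm a_gt0) (gtr0_norm b_gt0) mulf_div.
by congr (_ / _); ring.
Qed.

Lemma ddep_box_gt_small_extent c1 o1 L (i0 : 'I_n) : posvec o1 ->
  exists2 o0, posvec o0 &
  forall c' o', posvec o' -> vle o' o0 -> L < ddep_box p c1 o1 c' o'.
Proof.
move=> o1_gt0; have o1i0_gt0 := o1_gt0 i0.
have E1_gt0 : 0 < enorm o1 := enorm_gt0 i0 o1_gt0.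
set q := powR (o1 ord0 i0 / 2) p; have q_gt0 : 0 < q by rewrite powR_gt0 //; lra.
set t := Num.min (1 / 2) (small_den_bound L (enorm o1) q / enorm o1).
have t_gt0 : 0 < t.
  by rewrite lt_min (divr_gt0 (small_den_bound_gt0 L E1_gt0 q_gt0)) // andbT; lra.
have t_half : t <= 1 / 2 by rewrite ge_min lexx.
exists (t *: o1) => [|c' o' o'_gt0 o'_le]; first exact: posvecZ.
apply: (ltr_div_small_den (q := q)); rewrite ?enorm_gt0 ?powR_ge0 //.
- apply: le_trans (powR_coord_le_pnorm _ _ i0); rewrite // !mxE.
  have o'i0_le : o' ord0 i0 <= t * o1 ord0 i0 by have := o'_le i0; rewrite mxE.
  have t_o1 : t * o1 ord0 i0 <= 1 / 2 * o1 ord0 i0 by rewrite ler_pM2r.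
  apply: powR_half_le_dist => //; rewrite (ltW (o'_gt0 i0)) /=; lra.
- apply: (@le_trans _ _ (enorm (t *: o1))).
    apply: ler_enorm => i; rewrite !gtr0_norm ?o'_le //; exact: posvecZ.
  by rewrite enormZ gtr0_norm // -ler_pdivlMr // ge_min lexx orbT.
Qed.

Lemma concentric_boxes_separated c o N M (i0 : 'I_n) : posvec o ->
  exists rs : 'I_N -> R, (forall i, 0 < rs i <= 1) /\
  (forall i j, i != j -> M < ddep_box p c (rs i *: o) c (rs j *: o)).
Proof.
move=> o_gt0; set K := powR (pnorm p o) p / enorm o ^+ 2.
have K_gt0 : 0 < K.
  rewrite divr_gt0 ?exprn_gt0 ?(enorm_gt0 i0) //.
  apply: lt_le_trans (powR_coord_le_pnorm _ _ i0) => //.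
  by rewrite powR_gt0 ?normr_gt0 ?gt_eqF.
have [rs [rs_bnd rs_sep]] := separated_radii (M / K) p_gt0 ltr01.
exists (fun i => rs i); split=> // i j ij.
have [/andP[ri_gt0 _] /andP[rj_gt0 _]] := (rs_bnd i, rs_bnd j).
by rewrite ddep_box_scaled // -ltr_pdivrMr // rs_sep.
Qed.

End DepthDissimilarity.

Theorem theorem1 (R : realType) (n : nat) (p : R) (hn : (1 <= n)%N) (hp : 1 <= p) :
  (* (1) for balls *)
  (forall (c1 : 'rV[R]_n) (r1 : R) (c2 : 'rV[R]_n) (r2 : R),
     0 < r1 -> 0 < r2 -> forall Delta : R, 0 < Delta ->
     exists r0 : R, 0 < r0 /\
       forall (c' : 'rV[R]_n) (r' : R), 0 < r' ->
         eball c' r' `<=` eball c2 r2 -> r' <= r0 ->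
         ddep_ball p c1 r1 c' r' > ddep_ball p c1 r1 c2 r2 + Delta) /\
  (* (2) for balls *)
  (forall (c : 'rV[R]_n) (r : R), 0 < r ->
     forall (N : nat), (0 < N)%N -> forall M : R, 0 < M ->
     exists (cs : 'I_N -> 'rV[R]_n) (rs : 'I_N -> R),
       (forall i, 0 < rs i) /\
       (forall i, eball (cs i) (rs i) `<=` eball c r) /\
       (forall i j, i != j -> ddep_ball p (cs i) (rs i) (cs j) (rs j) > M)) /\
  (* (1) for boxes *)
  (forall (c1 o1 c2 o2 : 'rV[R]_n),
     posvec o1 -> posvec o2 -> forall Delta : R, 0 < Delta ->
     exists o0 : 'rV[R]_n, posvec o0 /\
       forall (c' o' : 'rV[R]_n), posvec o' ->
         box c' o' `<=` box c2 o2 -> vle o' o0 ->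
         ddep_box p c1 o1 c' o' > ddep_box p c1 o1 c2 o2 + Delta) /\
  (* (2) for boxes *)
  (forall (c o : 'rV[R]_n), posvec o ->
     forall (N : nat), (0 < N)%N -> forall M : R, 0 < M ->
     exists (cs os : 'I_N -> 'rV[R]_n),
       (forall i, posvec (os i)) /\
       (forall i, box (cs i) (os i) `<=` box c o) /\
       (forall i j, i != j -> ddep_box p (cs i) (os i) (cs j) (os j) > M)).
Proof.
have p_gt0 : 0 < p := lt_le_trans ltr01 hp.
pose i0 : 'I_n := Ordinal hn.
split=> [c1 r1 c2 r2 r1_gt0 _ Delta _ | ].
  have [r0 r0_gt0 far] :=
    ddep_ball_gt_small_radius p_gt0 c1 (ddep_ball p c1 r1 c2 r2 + Delta) r1_gt0.
  by exists r0; split=> // c' r' r'_gt0 _; exact: far.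
split=> [c r r_gt0 N _ M _ | ].
  have [rs [rs_bnd rs_sep]] := concentric_balls_separated p_gt0 c N M r_gt0.
  exists (fun=> c), rs; split=> [i | ]; first by case/andP: (rs_bnd i).
  by split=> // i; apply: subset_eball; case/andP: (rs_bnd i).
split=> [c1 o1 c2 o2 o1_gt0 _ Delta _ | c o o_gt0 N _ M _].
  have [ext ext_gt0 far] :=
    ddep_box_gt_small_extent p_gt0 c1 (ddep_box p c1 o1 c2 o2 + Delta) i0 o1_gt0.
  by exists ext; split=> // c' o' o'_gt0 _; exact: far.
have [rs [rs_bnd rs_sep]] := concentric_boxes_separated p_gt0 c N M i0 o_gt0.
exists (fun=> c), (fun i => rs i *: o); split=> [i | ].
  by case/andP: (rs_bnd i) => ri_gt0 _; exact: posvecZ.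
split=> // i; apply: subset_box_scale o_gt0.
by case/andP: (rs_bnd i) => /ltW -> ->.
Qed.
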